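(* Let $\psi$ be a CNF formula with only positive literals, with clauses $C_1,\dots,C_m$ each consisting of three distinct variables, and variables $x_1,\dots,x_p$, in which every variable appears in at least $3$ clauses. Let $G$ be the graph constructed as follows: (1) for each variable $x_i$ create a cycle $D_i$ whose number of vertices equals the number of clauses containing $x_i$, and, for each clause containing $x_i$, designate a distinct vertex of $D_i$ as corresponding to that clause; (2) add a vertex $a$ adjacent to every vertex of all cycles $D_1,\dots,D_p$; (3) subdivide every edge of the cycles and every edge incident to $a$ exactly twice (replacing it by a path with three edges); (4) for each clause $C_i=\{x_j,x_k,x_\ell\}$ add a triangle on new vertices $u_{ij},u_{ik},u_{i\ell}$ and make $u_{ij}$ adjacent to the vertex of $D_j$ corresponding to $C_i$, $u_{ik}$ adjacent to the vertex of $D_k$ corresponding to $C_i$, and $u_{i\ell}$ adjacent to the vertex of $D_\ell$ corresponding to $C_i$. If $G$ has a $1$-shallow topological minor of density $\frac{5m}{2m+1}$, then $\psi$ has an assignment in which every clause contains exactly one true variable.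
   Context: A graph $H$ is a $1$-shallow topological minor of $G$ if some graph obtained from $H$ by subdividing each edge at most twice is isomorphic to a subgraph of $G$. The density of $H$ is $\|H\|/|H|$ (number of edges divided by number of vertices). *)

From HB Require Import structures.
From mathcomp Require Import all_boot all_order all_algebra.
Set Implicit Arguments. Unset Strict Implicit. Unset Printing Implicit Defensive.
Import Order.TTheory GRing.Theory Num.Theory.

(* General graph notions.  A (finite simple) graph is given by a finite *)
(* carrier type U, a vertex predicate VU : pred U (the actual vertex    *)
(* set) and a symmetric irreflexive adjacency relation EU : rel U.       *)

Definition iso_to_subgraph (U1 U2 : finType)
  (V1 : pred U1) (E1 : rel U1) (V2 : pred U2) (E2 : rel U2) : Prop :=
  exists f : U1 -> U2,
    [/\ {in V1 &, injective f},
        (forall x, V1 x -> V2 (f x)) &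
        (forall x y, V1 x -> V1 y -> E1 x y -> E2 (f x) (f y))].

Definition is_simple_graph (n : nat) (eH : rel 'I_n) : Prop :=
  symmetric eH /\ irreflexive eH.

Definition nedges (n : nat) (eH : rel 'I_n) : nat :=
  #|[set xy : 'I_n * 'I_n | (xy.1 < xy.2)%N && eH xy.1 xy.2]|.

Definition density (n : nat) (eH : rel 'I_n) : rat :=
  ((nedges eH)%:R / n%:R)%R.

(* Subdivision of H where the edge {x,y} (x<y) is subdivided k x y times,
   k x y in {0,1,2}.  Carrier: 'I_n + ('I_n * 'I_n * 'I_2); the vertex
   inr (x,y,i) is the i-th subdivision vertex on the edge xy (from x). *)
Definition sub_carrier (n : nat) := ('I_n + ('I_n * 'I_n * 'I_2))%type.

Definition sub_V (n : nat) (eH : rel 'I_n) (k : 'I_n -> 'I_n -> 'I_3)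
  : pred (sub_carrier n) :=
  fun v => match v with
           | inl _ => true
           | inr (x, y, i) => [&& (x < y)%N, eH x y & (i < k x y)%N]
           end.

Definition sub_arc (n : nat) (eH : rel 'I_n) (k : 'I_n -> 'I_n -> 'I_3)
  (a b : sub_carrier n) : bool :=
  [exists x : 'I_n, exists y : 'I_n,
     [&& (x < y)%N, eH x y &
      [|| [&& (k x y == 0 :> nat), a == inl x & b == inl y],
          [&& (0 < k x y)%N, a == inl x & b == inr (x, y, ord0)],
          [&& (0 < k x y)%N, a == inr (x, y, inord (k x y).-1) & b == inl y] |
          [&& (k x y == 2 :> nat), a == inr (x, y, ord0) & b == inr (x, y, ord_max)]]]].

Definition sub_E (n : nat) (eH : rel 'I_n) (k : 'I_n -> 'I_n -> 'I_3)
  : rel (sub_carrier n) :=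
  fun a b => sub_arc eH k a b || sub_arc eH k b a.

Definition has_1stm_of_density (U : finType) (V : pred U) (E : rel U)
  (d : rat) : Prop :=
  exists (n : nat) (eH : rel 'I_n),
    [/\ is_simple_graph eH, density eH = d &
        exists k : 'I_n -> 'I_n -> 'I_3,
          iso_to_subgraph (sub_V eH k) (sub_E eH k) V E].

(* The CNF formula psi: m clauses, p variables; clause c consists of the *)
(* variables cl c 0, cl c 1, cl c 2 (all positive literals).              *)

Definition clause_has (m p : nat) (cl : 'I_m -> 'I_3 -> 'I_p)
  (j : 'I_p) (c : 'I_m) : bool := [exists t, cl c t == j].

(* Carrier of the constructed graph G:
   vA          : the apex a
   vD j c      : vertex of the cycle D_j corresponding to clause c
   vS j c t    : the two subdivision vertices of the cycle edge of D_j from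
                 (j,c) to (j, next (cyc j) c)   (t = 0 next to (j,c))
   vR j c t    : the two subdivision vertices of the edge a -- (j,c)
                 (t = 0 next to a)
   vU c t      : triangle vertex u_{c, cl c t}. *)
Definition G_carrier (p m : nat) :=
  (unit + ('I_p * 'I_m) + ('I_p * 'I_m * 'I_2) + ('I_p * 'I_m * 'I_2)
   + ('I_m * 'I_3))%type.

Section GVerts.
Variables p m : nat.
Definition vA : G_carrier p m := inl (inl (inl (inl tt))).
Definition vD (j : 'I_p) (c : 'I_m) : G_carrier p m := inl (inl (inl (inr (j, c)))).
Definition vS (j : 'I_p) (c : 'I_m) (t : 'I_2) : G_carrier p m := inl (inl (inr (j, c, t))).
Definition vR (j : 'I_p) (c : 'I_m) (t : 'I_2) : G_carrier p m := inl (inr (j, c, t)).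
Definition vU (c : 'I_m) (t : 'I_3) : G_carrier p m := inr (c, t).
End GVerts.

Definition G_V (p m : nat) (cl : 'I_m -> 'I_3 -> 'I_p) : pred (G_carrier p m) :=
  fun v => match v with
           | inl (inl (inl (inl _))) => true
           | inl (inl (inl (inr (j, c)))) => clause_has cl j c
           | inl (inl (inr (j, c, _))) => clause_has cl j c
           | inl (inr (j, c, _)) => clause_has cl j c
           | inr _ => true
           end.

(* cyc j : the cyclic order of the cycle D_j (its vertices = the clauses
   containing x_j); the cycle edges are {c, next (cyc j) c}. *)
Definition G_arc (p m : nat) (cl : 'I_m -> 'I_3 -> 'I_p)
  (cyc : 'I_p -> seq 'I_m) (x y : G_carrier p m) : bool :=
  [|| [exists j : 'I_p, exists c : 'I_m,
        clause_has cl j c &&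
        [|| (x == vD j c) && (y == vS j c ord0),
            (x == vS j c ord0) && (y == vS j c ord_max),
            (x == vS j c ord_max) && (y == vD j (next (cyc j) c)),
            (x == vA p m) && (y == vR j c ord0),
            (x == vR j c ord0) && (y == vR j c ord_max) |
            (x == vR j c ord_max) && (y == vD j c)]],
      [exists c : 'I_m, exists t : 'I_3, exists t' : 'I_3,
        [&& t != t', x == vU p c t & y == vU p c t']] |
      [exists c : 'I_m, exists t : 'I_3,
        (x == vU p c t) && (y == vD (cl c t) c)]].

Definition G_E (p m : nat) (cl : 'I_m -> 'I_3 -> 'I_p)
  (cyc : 'I_p -> seq 'I_m) : rel (G_carrier p m) :=
  fun x y => G_arc cl cyc x y || G_arc cl cyc y x.

(* Let a subdivision of H, each edge subdivided at most twice, be drawn in G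
   with branch set B.  In G every vertex other than the apex a has degree at
   most 4, and only cycle vertices reach 4; in the drawing a subdivision vertex
   has degree 2 and no three of them are consecutive.  If a is not a branch
   vertex, every cycle vertex of degree 4 in B forces a branch vertex on its
   path to a, whence 2||H|| <= 3|H|, impossible at density 5m/(2m+1) > 3/2.
   If a is a branch vertex, each edge at a is paid for by the first branch
   vertex on its path a - R - R - D, and the subdivision vertices cannot cover
   a triangle alone, so with b = |H| - 1 we get 2||H|| <= 4b + min(b, 2m).
   For m >= 3 the density then forces b = 2m, every branch vertex other than a
   being a cycle vertex of degree 4, exactly two per clause.  Such a vertex
   forces its successor on the cycle into B as well, so each cycle D_j lies in
   B or avoids it, and x_j := "D_j avoids B" makes exactly one variable of each
   clause true. *)

From HB Require Import structures.
From mathcomp Require Import all_boot all_order all_algebra.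
From mathcomp Require Import zify.
Set Implicit Arguments. Unset Strict Implicit. Unset Printing Implicit Defensive.
Import GRing.Theory Num.Theory.

Lemma ord2P (i : 'I_2) : i = ord0 \/ i = ord_max.
Proof. by case: i => [[|[|]]] //= ?; [left|right]; apply/val_inj. Qed.

Lemma card_set_pair (I J : finType) (P : pred (I * J)) :
  #|[set x | P x]| = \sum_(i : I) #|[set j | P (i, j)]|.
Proof.
rewrite -sum1_card; under [RHS]eq_bigr => i _ do rewrite -sum1_card.
by rewrite pair_big_dep /=; apply: eq_bigl => -[i j]; rewrite !inE.
Qed.

Lemma card_set_sum (T : finType) (A : {set T}) (P : pred T) :
  #|[set v in A | P v]| = \sum_(v in A) P v.
Proof.
rewrite -sum1_card big_mkcond [RHS]big_mkcond /=.
by apply: eq_bigr => v _; rewrite inE; case: (v \in A); case: (P v).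
Qed.

Lemma leq_sum_eq (I : finType) (E F : I -> nat) :
  (forall i, E i <= F i) -> \sum_i F i <= \sum_i E i -> forall i, E i = F i.
Proof.
move=> le_EF le_sum i.
have [le_sum' /esym] := leqif_sum (fun i (_ : predT i) => leqif_eq (le_EF i)).
by rewrite eqn_leq le_sum' le_sum => /forallP/(_ i)/eqP.
Qed.

(** * Subdivisions *)

Section Subdivision.
Variables (n : nat) (eH : rel 'I_n) (k : 'I_n -> 'I_n -> 'I_3).
Local Notation S := (sub_carrier n).
Local Notation VS := (sub_V eH k).
Local Notation ES := (sub_E eH k).

Inductive sub_step : S -> S -> Prop :=
| SubDirect (x y : 'I_n) : x < y -> eH x y -> k x y = 0 :> nat ->
    sub_step (inl x) (inl y)
| SubFirst (x y : 'I_n) : x < y -> eH x y -> 0 < k x y ->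
    sub_step (inl x) (inr (x, y, ord0))
| SubLast (x y : 'I_n) : x < y -> eH x y -> 0 < k x y ->
    sub_step (inr (x, y, inord (k x y).-1)) (inl y)
| SubMiddle (x y : 'I_n) : x < y -> eH x y -> k x y = 2 :> nat ->
    sub_step (inr (x, y, ord0)) (inr (x, y, ord_max)).

Lemma sub_arcP a b : reflect (sub_step a b) (sub_arc eH k a b).
Proof.
apply: (iffP idP); last first.
  by case=> x y xy exy h; apply/existsP; exists x; apply/existsP; exists y;
    rewrite xy exy /= h ?eqxx ?orbT.
case/existsP=> x /existsP[y /and3P[xy exy]].
case/or4P=> [/and3P[/eqP h /eqP -> /eqP ->]|/and3P[h /eqP -> /eqP ->]
            |/and3P[h /eqP -> /eqP ->]|/and3P[/eqP h /eqP -> /eqP ->]].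
- exact: SubDirect.
- exact: SubFirst.
- exact: SubLast.
- exact: SubMiddle.
Qed.

Lemma sub_E_sym : symmetric ES.
Proof. by move=> a b; rewrite /sub_E orbC. Qed.

Lemma sub_E_step a b : sub_step a b -> ES a b /\ ES b a.
Proof. by move/sub_arcP=> ab; split; rewrite /sub_E ab ?orbT. Qed.

Lemma k_le2 (x y : 'I_n) : k x y <= 2.
Proof. by have := ltn_ord (k x y). Qed.

Lemma inord_k_pred (x y : 'I_n) : (inord (k x y).-1 : 'I_2) = (k x y).-1 :> nat.
Proof. by rewrite inordK //; have := k_le2 x y; case: (k x y : nat) => [|[|[|]]]. Qed.

Definition sub_nbrL (x y : 'I_n) (i : 'I_2) : S :=
  if i == 0 :> nat then inl x else inr (x, y, ord0).
Definition sub_nbrR (x y : 'I_n) (i : 'I_2) : S :=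
  if i == (k x y).-1 :> nat then inl y else inr (x, y, ord_max).

Lemma sub_nbrs_subdiv (x y : 'I_n) (i : 'I_2) w :
  ES (inr (x, y, i)) w -> w = sub_nbrL x y i \/ w = sub_nbrR x y i.
Proof.
case/orP=> /sub_arcP h; inversion h; subst; rewrite /sub_nbrL /sub_nbrR.
- by right; rewrite inord_k_pred eqxx.
- by right; case: eqP => //=; lia.
- by left.
- by left.
Qed.

Lemma sub_nbrs_subdiv_ok (x y : 'I_n) (i : 'I_2) : x < y -> eH x y -> i < k x y ->
  [/\ ES (inr (x, y, i)) (sub_nbrL x y i), ES (inr (x, y, i)) (sub_nbrR x y i),
      VS (sub_nbrL x y i), VS (sub_nbrR x y i) & sub_nbrL x y i != sub_nbrR x y i].
Proof.
move=> xy exy ik; have k2 := k_le2 x y.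
rewrite /sub_nbrL /sub_nbrR.
case: (ord2P i) ik => -> /= ik.
- have e1 : sub_step (inl x) (inr (x, y, ord0)) by apply: SubFirst.
  case: eqP => hk.
  + have e2 : sub_step (inr (x, y, ord0)) (inl y).
      have -> : (ord0 : 'I_2) = inord (k x y).-1 by apply/val_inj; rewrite /= inord_k_pred -hk.
      exact: SubLast.
    split; rewrite ?(proj2 (sub_E_step e1)) ?(proj1 (sub_E_step e2)) //=.
    by apply/eqP=> -[] e; move: xy; rewrite e ltnn.
  + have hk2 : k x y = 2 :> nat by lia.
    have e2 := SubMiddle xy exy hk2.
    by split; rewrite ?(proj2 (sub_E_step e1)) ?(proj1 (sub_E_step e2)) //= xy exy hk2.
- have hk2 : k x y = 2 :> nat by lia.
  rewrite hk2 /=.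
  have e1 := SubMiddle xy exy hk2.
  have e2 : sub_step (inr (x, y, ord_max)) (inl y).
    have -> : (ord_max : 'I_2) = inord (k x y).-1 by apply/val_inj; rewrite /= inord_k_pred hk2.
    by apply: SubLast; rewrite ?hk2.
  by split; rewrite ?(proj2 (sub_E_step e1)) ?(proj1 (sub_E_step e2)) //= xy exy.
Qed.

Definition is_subdiv (s : S) := if s is inr _ then true else false.

Lemma card_sub_nbrs_subdiv s : VS s -> is_subdiv s ->
  #|[set w | VS w && ES s w]| = 2.
Proof.
case: s => // -[[x y] i] /= /and3P[xy exy ik] _.
have [e1 e2 v1 v2 neq] := sub_nbrs_subdiv_ok xy exy ik.
apply: (@eq_trans _ _ #|[set sub_nbrL x y i; sub_nbrR x y i]|); last by rewrite cards2 neq.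
apply: eq_card => w; rewrite !inE; apply/idP/idP.
- by case/andP=> _ /sub_nbrs_subdiv [->|->]; rewrite eqxx ?orbT.
- by case/orP=> /eqP->; rewrite ?v1 ?v2 ?e1 ?e2.
Qed.

Lemma sub_subdiv_path s1 s2 s3 : VS s2 ->
  is_subdiv s1 -> is_subdiv s2 -> is_subdiv s3 -> ES s1 s2 -> ES s2 s3 -> s1 = s3.
Proof.
case: s2 => // -[[x y] i] /= /and3P[xy exy ik] sub1 _ sub3.
rewrite sub_E_sym => e1 e3; have k2 := k_le2 x y.
case: (sub_nbrs_subdiv e1) => e1'; case: (sub_nbrs_subdiv e3) => e3'; subst s1 s3 => //;
  move: sub1 sub3; rewrite /sub_nbrL /sub_nbrR;
  case: eqP => h0; case: eqP => h1 //= _ _; lia.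
Qed.

Hypotheses (eH_sym : symmetric eH) (eH_irr : irreflexive eH).

Definition sub_branch_nbr (x y : 'I_n) : S :=
  if x < y then (if k x y == 0 :> nat then inl y else inr (x, y, ord0))
  else (if k y x == 0 :> nat then inl y else inr (y, x, inord (k y x).-1)).

Lemma sub_branch_nbrP x y : eH x y -> VS (sub_branch_nbr x y) && ES (inl x) (sub_branch_nbr x y).
Proof.
move=> exy; rewrite /sub_branch_nbr; case: ltnP => xy.
- case: eqP => h0 /=; first by rewrite (proj1 (sub_E_step (SubDirect xy exy h0))).
  have h1 : 0 < k x y by lia.
  by rewrite xy exy h1 (proj1 (sub_E_step (SubFirst xy exy h1))).
- have yx : y < x.
    rewrite ltn_neqAle xy andbT; apply: contraTneq exy => /val_inj ->.
    by rewrite eH_irr.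
  have eyx : eH y x by rewrite eH_sym.
  case: eqP => h0 /=; first by rewrite (proj2 (sub_E_step (SubDirect yx eyx h0))).
  have h1 : 0 < k y x by lia.
  rewrite yx eyx inord_k_pred (proj2 (sub_E_step (SubLast yx eyx h1))) andbT.
  by have := k_le2 y x; lia.
Qed.

Lemma sub_branch_nbr_inj x : {in [set y | eH x y] &, injective (sub_branch_nbr x)}.
Proof.
move=> y y' _ _; rewrite /sub_branch_nbr.
by case: ltnP => h1; case: ltnP => h2; case: eqP => _; case: eqP => _ e;
  inversion e; subst => //; try apply/val_inj; lia.
Qed.

Lemma card_nbrs_le_sub x : #|[set y | eH x y]| <= #|[set w | VS w && ES (inl x) w]|.
Proof.
rewrite -(card_in_imset (@sub_branch_nbr_inj x)); apply/subset_leq_card/subsetP=> w.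
by case/imsetP=> y; rewrite inE => /sub_branch_nbrP nbr_w ->; rewrite inE.
Qed.

Lemma sum_card_nbrs : \sum_(x : 'I_n) #|[set y | eH x y]| = 2 * nedges eH.
Proof.
rewrite -(card_set_pair (fun xy : 'I_n * 'I_n => eH xy.1 xy.2)) /nedges.
set A := [set xy : 'I_n * 'I_n | (xy.1 < xy.2) && eH xy.1 xy.2].
pose swap (xy : 'I_n * 'I_n) := (xy.2, xy.1).
have swap_inj : injective swap by move=> [a b] [c d] [-> ->].
have -> : [set xy : 'I_n * 'I_n | eH xy.1 xy.2] = A :|: swap @: A.
  apply/setP=> -[a b]; rewrite !inE /=; apply/idP/idP.
  - move=> e; case: (ltngtP a b) => h; first by rewrite e.
    + by apply/orP; right; apply/imsetP; exists (b, a); rewrite // inE /= h eH_sym.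
    + by move: e; rewrite (val_inj h) eH_irr.
  - case/orP=> [/andP[_ ->] //|/imsetP[[c d]]].
    by rewrite inE /= => /andP[_ e] [-> ->]; rewrite eH_sym.
rewrite cardsU card_imset //.
have -> : A :&: swap @: A = set0.
  apply/setP=> -[a b]; rewrite !inE /=; apply/negP.
  by case/andP=> /andP[ab _] /imsetP[[c d]]; rewrite inE /= => /andP[cd _] [ea eb]; subst; lia.
by rewrite cards0 subn0 addnn mul2n.
Qed.

End Subdivision.

(** * Drawings of 1-shallow subdivisions *)

Definition deg (U : finType) (R : rel U) (v : U) := #|[set w | R v w]|.

(* [B] and [T] are the images of the branch and of the subdivision vertices of
   a subdivision, with each edge subdivided at most twice, drawn in the graph
   [E]; [R] is the image of its edges. *)
Record shallow_model (U : finType) (E : rel U) (B T : {set U}) (R : rel U) : Prop :=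
  ShallowModel {
    model_sym : symmetric R;
    model_sub : subrel R E;
    model_cover : forall v w, R v w -> (v \in B) || (v \in T);
    model_deg_subdiv : forall v, v \in T -> deg R v = 2;
    model_subdiv_path : forall u v w, u \in T -> v \in T -> w \in T ->
      R u v -> R v w -> u = w }.

Lemma deg_le_card (U : finType) (R : rel U) v (N : {set U}) :
  (forall w, R v w -> w \in N) -> deg R v <= #|N|.
Proof. by move=> RN; apply/subset_leq_card/subsetP=> w; rewrite inE; apply: RN. Qed.

Lemma deg_le2 (U : finType) (R : rel U) v x y :
  (forall w, R v w -> w = x \/ w = y) -> deg R v <= 2.
Proof.
move=> Rxy; apply: leq_trans (deg_le_card (N := [set x; y]) _) _.
  by move=> w /Rxy [->|->]; rewrite !inE eqxx ?orbT.
by rewrite cards2; case: (_ != _).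
Qed.

Section ShallowModel.
Variables (U : finType) (E : rel U) (B T : {set U}) (R : rel U).
Hypothesis model : shallow_model E B T R.

Lemma model_nbr_subdiv v w : R v w -> w \notin B -> w \in T.
Proof.
rewrite (model_sym model) => /(model_cover model).
by case/orP=> [->|] //.
Qed.

Lemma model_subdiv_nbrs3 v x y z : v \in T -> R v x -> R v y -> R v z ->
  [|| x == y, x == z | y == z].
Proof.
move=> vT Rx Ry Rz; apply/negPn/negP; rewrite !negb_or => /and3P[nxy nxz nyz].
have : #|[set x; y; z]| <= deg R v.
  by apply/subset_leq_card/subsetP=> w; rewrite !inE => /orP[/orP[]|] /eqP->.
by rewrite (model_deg_subdiv model vT) -setUA cardsU1 cards2 !inE negb_or nxy nxz nyz.
Qed.

Lemma model_subdiv_next u v w : R u v -> v \notin B ->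
  (forall z, R v z -> z = u \/ z = w) -> v \in T /\ R v w.
Proof.
move=> Ruv vB nbrs; have vT := model_nbr_subdiv Ruv vB; split=> //.
apply/negPn/negP=> Rvw; have := model_deg_subdiv model vT.
suff : deg R v <= #|[set u]| by rewrite cards1 => /[swap] ->.
apply: deg_le_card => z Rvz; rewrite inE.
by case: (nbrs z Rvz) => [->|ezw] //; move: Rvz; rewrite ezw (negbTE Rvw).
Qed.

Lemma model_path3_branch u v1 v2 w : R u v1 ->
  (forall z, R v1 z -> z = u \/ z = v2) -> (forall z, R v2 z -> z = v1 \/ z = w) ->
  v1 != w -> [\/ v1 \in B, v2 \in B | (w \in B) && R v2 w].
Proof.
move=> Ruv1 nbrs1 nbrs2 v1w.
case v1B: (v1 \in B); first exact: Or31.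
have [v1T Rv12] := model_subdiv_next Ruv1 (negbT v1B) nbrs1.
case v2B: (v2 \in B); first exact: Or32.
have [v2T Rv2w] := model_subdiv_next Rv12 (negbT v2B) nbrs2.
case wB: (w \in B); first exact: Or33.
have wT := model_nbr_subdiv Rv2w (negbT wB).
by move: v1w; rewrite (model_subdiv_path model v1T v2T wT Rv12 Rv2w) eqxx.
Qed.

End ShallowModel.

Section Embedding.
Variables (U : finType) (E : rel U).
Variables (n : nat) (eH : rel 'I_n) (k : 'I_n -> 'I_n -> 'I_3).
Local Notation VS := (sub_V eH k).
Local Notation ES := (sub_E eH k).
Variable f : sub_carrier n -> U.
Hypothesis f_inj : {in VS &, injective f}.
Hypothesis f_edge : forall s s', VS s -> VS s' -> ES s s' -> E (f s) (f s').

Definition img_rel : rel U := fun v w =>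
  [exists s, exists s', [&& VS s, VS s', ES s s', f s == v & f s' == w]].

Lemma img_relP v w : reflect (exists s s', [/\ VS s, VS s', ES s s', v = f s & w = f s'])
  (img_rel v w).
Proof.
apply: (iffP existsP) => [[s /existsP[s' /and5P[Vs Vs' e /eqP<- /eqP<-]]]|].
  by exists s, s'.
case=> s [s' [Vs Vs' e -> ->]].
by exists s; apply/existsP; exists s'; rewrite Vs Vs' e !eqxx.
Qed.

Lemma img_relE s s' : VS s -> VS s' -> img_rel (f s) (f s') = ES s s'.
Proof.
move=> Vs Vs'; apply/img_relP/idP => [[s1 [s1' [V1 V1' e]]]|e].
  by move=> /(f_inj Vs V1)-> /(f_inj Vs' V1')->.
by exists s, s'.
Qed.

Lemma deg_img_rel s : VS s -> deg img_rel (f s) = #|[set w | VS w && ES s w]|.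
Proof.
move=> Vs; rewrite /deg -(card_in_imset (f := f) (D := [set w | VS w && ES s w])); last first.
  by move=> a b; rewrite !inE => /andP[Va _] /andP[Vb _]; apply: f_inj.
apply: eq_card => w; rewrite !inE; apply/idP/imsetP.
- case/img_relP=> s1 [s' [V1 V' e /(f_inj Vs V1) es1 ->]]; subst s1.
  by exists s'; rewrite // inE V' e.
- by case=> s'; rewrite inE => /andP[V' e] ->; rewrite img_relE.
Qed.

Hypotheses (eH_sym : symmetric eH) (eH_irr : irreflexive eH).

Definition img_branch : {set U} := [set f (inl x) | x : 'I_n].
Definition img_subdiv : {set U} := [set f s | s in [set s | VS s && is_subdiv s]].

Lemma img_subdivP v : v \in img_subdiv -> exists2 s, VS s && is_subdiv s & v = f s.
Proof. by case/imsetP=> s; rewrite inE; exists s. Qed.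

Lemma img_shallow_model : shallow_model E img_branch img_subdiv img_rel.
Proof.
split.
- by move=> v w; apply/img_relP/img_relP=> -[s [s' [Vs Vs' e -> ->]]];
    exists s', s; split=> //; rewrite sub_E_sym.
- by move=> v w /img_relP[s [s' [Vs Vs' e -> ->]]]; apply: f_edge.
- move=> v w /img_relP[[x|s] [s' [Vs Vs' e -> _]]].
    by apply/orP; left; apply/imsetP; exists x.
  by apply/orP; right; apply/imsetP; exists (inr s); rewrite // inE Vs.
- by move=> v /img_subdivP[s /andP[Vs subs] ->]; rewrite deg_img_rel // card_sub_nbrs_subdiv.
- move=> u v w /img_subdivP[s1 /andP[V1 sub1] ->] /img_subdivP[s2 /andP[V2 sub2] ->].
  move=> /img_subdivP[s3 /andP[V3 sub3] ->]; rewrite !img_relE // => e12 e23.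
  by rewrite (sub_subdiv_path V2 sub1 sub2 sub3 e12 e23).
Qed.

Lemma card_img_branch : #|img_branch| = n.
Proof.
by rewrite card_imset ?card_ord // => x y /f_inj => /(_ isT isT) [].
Qed.

Lemma sum_deg_img_branch : 2 * nedges eH <= \sum_(v in img_branch) deg img_rel v.
Proof.
rewrite big_imset /=; last by move=> x y _ _ /f_inj => /(_ isT isT) [].
rewrite -(sum_card_nbrs eH_sym eH_irr); apply: leq_sum => x _.
by rewrite deg_img_rel //; apply: card_nbrs_le_sub.
Qed.

End Embedding.

Lemma shallow_model_of_embedding (U : finType) (V : pred U) (E : rel U)
    (n : nat) (eH : rel 'I_n) (k : 'I_n -> 'I_n -> 'I_3) :
  is_simple_graph eH -> iso_to_subgraph (sub_V eH k) (sub_E eH k) V E ->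
  exists B T R, [/\ shallow_model E B T R, #|B| = n &
    2 * nedges eH <= \sum_(v in B) deg R v].
Proof.
move=> [eH_sym eH_irr] [f [f_inj _ f_edge]].
exists (img_branch f), (img_subdiv eH k f), (img_rel eH k f).
split; [exact: img_shallow_model f_inj f_edge | exact: card_img_branch f_inj
  | exact: sum_deg_img_branch f_inj eH_sym eH_irr].
Qed.

Lemma density_frac (n : nat) (eH : rel 'I_n) (a b : nat) : 0 < a -> 0 < b ->
  density eH = (a%:R / b%:R)%R -> nedges eH * b = a * n /\ 0 < n.
Proof.
move=> a_gt0 b_gt0; rewrite /density; case: (posnP n) => [n0|n_gt0].
  have -> : (n%:R : rat) = 0%R by rewrite n0.
  rewrite invr0 mulr0 => /esym/eqP; rewrite mulf_eq0 invr_eq0 !pnatr_eq0; lia.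
move/eqP; rewrite eqr_div ?pnatr_eq0 -?lt0n // -!natrM eqr_nat => /eqP.
by split.
Qed.

Lemma fconnect_closed (T : finType) (f : T -> T) (P : pred T) x y :
  (forall z, P z -> P (f z)) -> fconnect f x y -> P x -> P y.
Proof.
by move=> Pf /iter_findex <-; elim: (findex f x y) => //= i IH Px; apply/Pf/IH.
Qed.

(* [e] = ||H||, [b.+1] = |H|, [x] counts the branch cycle vertices of degree 4
   and [y] the branch triangle vertices. *)
Lemma extremal_count m b x y e : 3 <= m ->
  2 * e + y <= 4 * b + x -> x <= b -> x <= 2 * m + y -> e * (2 * m + 1) = 5 * m * b.+1 ->
  [/\ b = 2 * m, x = 2 * m & y = 0].
Proof.
move=> m3 le_e le_xb le_xm e_eq.
have le_mul := leq_mul le_e (leqnn (2 * m + 1)).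
have b_eq : b = 2 * m by case: (ltngtP b (2 * m)) => // b_m; exfalso; nia.
have e_eq' : e = 5 * m.
  by apply/eqP; rewrite -(@eqn_pmul2r (2 * m + 1)) ?addn1 // -addn1 e_eq b_eq; apply/eqP; lia.
by split; lia.
Qed.

Lemma no_perfect_matching_ord3 (R : rel 'I_3) : symmetric R ->
  (forall t, exists2 t', t' != t & R t t') ->
  ~ (forall t t1 t2, t1 != t -> t2 != t -> R t t1 -> R t t2 -> t1 = t2).
Proof.
move=> Rsym Rex Runiq.
pose o0 : 'I_3 := @Ordinal 3 0 isT; pose o1 : 'I_3 := @Ordinal 3 1 isT.
pose o2 : 'I_3 := @Ordinal 3 2 isT.
have ord3P (t : 'I_3) : [\/ t = o0, t = o1 | t = o2].
  by case: t => -[|[|[|]]] // lt; [apply: Or31 | apply: Or32 | apply: Or33]; apply/val_inj.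
have two_nbrs t t1 t2 : R t t1 -> R t t2 -> t1 != t -> t2 != t -> t1 != t2 -> False.
  by move=> r1 r2 n1 n2; rewrite (Runiq t t1 t2) ?eqxx.
have [t1 n1 r1] := Rex o0; have [t2 n2 r2] := Rex o2.
case: (ord3P t1) n1 r1 => -> // _ r1; case: (ord3P t2) n2 r2 => -> // _ r2.
- by apply: (two_nbrs o0 o1 o2) => //; rewrite Rsym.
- by apply: (two_nbrs o1 o0 o2) => //; rewrite Rsym.
- have [t3 n3 r3] := Rex o1.
  case: (ord3P t3) n3 r3 => -> // _ r3.
  + by apply: (two_nbrs o0 o2 o1) => //; rewrite Rsym.
  + by apply: (two_nbrs o2 o0 o1) => //; rewrite Rsym.
- by apply: (two_nbrs o2 o0 o1) => //; rewrite Rsym.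
Qed.

(** * The graph G *)

Section GraphG.
Variables (p m : nat) (cl : 'I_m -> 'I_3 -> 'I_p) (cyc : 'I_p -> seq 'I_m).
Local Notation G := (G_carrier p m).
Local Notation GE := (G_E cl cyc).
Local Notation apex := (vA p m).

Inductive G_step : G -> G -> Prop :=
| StepDS j c : G_step (vD j c) (vS j c ord0)
| StepSS j c : G_step (vS j c ord0) (vS j c ord_max)
| StepSD j c : G_step (vS j c ord_max) (vD j (next (cyc j) c))
| StepAR j c : G_step apex (vR j c ord0)
| StepRR j c : G_step (vR j c ord0) (vR j c ord_max)
| StepRD j c : G_step (vR j c ord_max) (vD j c)
| StepUU c t t' : t != t' -> G_step (vU p c t) (vU p c t')
| StepUD c t : G_step (vU p c t) (vD (cl c t) c).

Lemma G_E_step x y : GE x y -> G_step x y \/ G_step y x.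
Proof.
have arc_step u v : G_arc cl cyc u v -> G_step u v.
  case/or3P.
  - case/existsP=> j /existsP[c /andP[_]].
    by do ![case/orP=> [/andP[/eqP-> /eqP->]|]; first by constructor];
      case/andP=> /eqP-> /eqP->; constructor.
  - by case/existsP=> c /existsP[t /existsP[t' /and3P[tt' /eqP-> /eqP->]]]; constructor.
  - by case/existsP=> c /existsP[t /andP[/eqP-> /eqP->]]; constructor.
by case/orP=> /arc_step; [left | right].
Qed.

Lemma G_nbr_apex w : GE apex w -> exists j c, w = vR j c ord0.
Proof. by case/G_E_step=> h; inversion h; eauto. Qed.

Lemma G_nbr_R0 j c w : GE (vR j c ord0) w -> w = apex \/ w = vR j c ord_max.
Proof. by case/G_E_step=> h; inversion h; subst; auto. Qed.

Lemma G_nbr_R1 j c w : GE (vR j c ord_max) w -> w = vR j c ord0 \/ w = vD j c.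
Proof. by case/G_E_step=> h; inversion h; subst; auto. Qed.

Lemma G_nbr_S0 j c w : GE (vS j c ord0) w -> w = vD j c \/ w = vS j c ord_max.
Proof. by case/G_E_step=> h; inversion h; subst; auto. Qed.

Lemma G_nbr_S1 j c w :
  GE (vS j c ord_max) w -> w = vS j c ord0 \/ w = vD j (next (cyc j) c).
Proof. by case/G_E_step=> h; inversion h; subst; auto. Qed.

Lemma G_nbr_U c t w : GE (vU p c t) w ->
  w = vD (cl c t) c \/ exists2 t', t' != t & w = vU p c t'.
Proof.
case/G_E_step=> h; inversion h; subst; auto; right.
- by exists t'; rewrite // eq_sym.
- by exists t0.
Qed.

Hypothesis cl_inj : forall c, injective (cl c).
Hypothesis cyc_uniq : forall j, uniq (cyc j).

Definition clause_pos (j : 'I_p) (c : 'I_m) : 'I_3 := odflt ord0 [pick t | cl c t == j].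

Lemma clause_posE c t : clause_pos (cl c t) c = t.
Proof. by rewrite /clause_pos; case: pickP => [t' /eqP/cl_inj -> //|/(_ t)]; rewrite eqxx. Qed.

Definition vD_nbrs j c : seq G :=
  [:: vS j c ord0; vS j (prev (cyc j) c) ord_max; vR j c ord_max; vU p c (clause_pos j c)].

Lemma G_nbr_D j c w : GE (vD j c) w -> w \in vD_nbrs j c.
Proof.
rewrite !inE; case/G_E_step=> h; inversion h; subst;
  by rewrite ?clause_posE ?prev_next ?cyc_uniq ?eqxx ?orbT.
Qed.

Section Model.
Variables (B T : {set G}) (ES : rel G).
Hypothesis model : shallow_model GE B T ES.
Local Notation deg := (deg ES).

Lemma model_G_E v w : ES v w -> GE v w.
Proof. exact: (model_sub model). Qed.

Lemma deg_vR j c t : deg (vR j c t) <= 2.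
Proof.
case: (ord2P t) => ->; [apply: (deg_le2 (x := apex) (y := vR j c ord_max))
  | apply: (deg_le2 (x := vR j c ord0) (y := vD j c))];
  move=> w /model_G_E; [exact: G_nbr_R0 | exact: G_nbr_R1].
Qed.

Lemma deg_vS j c t : deg (vS j c t) <= 2.
Proof.
case: (ord2P t) => ->; [apply: (deg_le2 (x := vD j c) (y := vS j c ord_max))
  | apply: (deg_le2 (x := vS j c ord0) (y := vD j (next (cyc j) c)))];
  move=> w /model_G_E; [exact: G_nbr_S0 | exact: G_nbr_S1].
Qed.

Lemma deg_vU c t : deg (vU p c t) <= 3.
Proof.
apply: leq_trans (deg_le_card (N := vD (cl c t) c |: [set vU p c t' | t' in [set~ t]]) _) _.
  move=> w /model_G_E /G_nbr_U [->|[t' t't ->]]; rewrite !inE ?eqxx //.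
  by rewrite imset_f ?orbT // !inE.
rewrite cardsU1 -[3]/(1 + 2) leq_add ?leq_b1 //.
by apply: leq_trans (leq_imset_card _ _) _; rewrite cardsC1 card_ord.
Qed.

Lemma deg_vD j c : deg (vD j c) <= 4.
Proof.
apply: leq_trans (deg_le_card (N := [set w in vD_nbrs j c]) _) _.
  by move=> w /model_G_E /G_nbr_D; rewrite inE.
by rewrite cardsE card_size.
Qed.

Lemma deg4_vD_nbrs j c : 4 <= deg (vD j c) -> forall w, w \in vD_nbrs j c -> ES (vD j c) w.
Proof.
move=> deg4 w wD.
have sub : [set w | ES (vD j c) w] \subset vD_nbrs j c.
  by apply/subsetP=> x; rewrite inE => /model_G_E /G_nbr_D.
have /subset_cardP/(_ sub) eq_nbrs : #|[set w | ES (vD j c) w]| = #|vD_nbrs j c|.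
  by apply/eqP; rewrite eqn_leq subset_leq_card //= (leq_trans (card_size (vD_nbrs j c)) deg4).
by move: (eq_nbrs w); rewrite wD inE.
Qed.

Definition is_vR (v : G) := if v is inl (inr _) then true else false.
Definition is_vU (v : G) := if v is inr _ then true else false.
Definition full_vD (v : G) := if v is inl (inl (inl (inr _))) then 4 <= deg v else false.
(* On the path apex - vR j c 0 - vR j c 1 - vD j c, the first branch vertex is
   an R-vertex or a cycle vertex entered from vR j c 1: these pay for the edges
   at the apex. *)
Definition spoke (v : G) := is_vR v ||
  (if v is inl (inl (inl (inr (j, c)))) then ES (vR j c ord_max) v else false).

Lemma deg_spoke_is_vU_le v : v != apex -> deg v + spoke v + is_vU v <= 4 + full_vD v.
Proof.
case: v => [[[[[]|[j c]]|[[j c] t]]|[[j c] t]]|[c t]] //= _.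
- have := deg_vD j c; rewrite /vD /spoke /full_vD /=.
  by case: (leqP 4 (deg _)) => deg4; case: (ES _ _) => /=; lia.
- by have := deg_vS j c t; rewrite /vS /spoke /full_vD /=; lia.
- by have := deg_vR j c t; rewrite /vR /spoke /full_vD /=; lia.
- by have := deg_vU c t; rewrite /vU /spoke /full_vD /=; lia.
Qed.

Lemma deg_is_vR_le v : v != apex -> deg v + is_vR v <= 3 + full_vD v.
Proof.
case: v => [[[[[]|[j c]]|[[j c] t]]|[[j c] t]]|[c t]] //= _.
- by have := deg_vD j c; rewrite /vD /full_vD /=; case: (leqP 4 (deg _)) => deg4; lia.
- by have := deg_vS j c t; rewrite /vS /full_vD /=; lia.
- by have := deg_vR j c t; rewrite /vR /full_vD /=; lia.
- by have := deg_vU c t; rewrite /vU /full_vD /=; lia.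
Qed.

Definition spoke_branch (x : 'I_p * 'I_m) : G :=
  if vR x.1 x.2 ord0 \in B then vR x.1 x.2 ord0
  else if vR x.1 x.2 ord_max \in B then vR x.1 x.2 ord_max else vD x.1 x.2.

Definition spoke_index (v : G) : option ('I_p * 'I_m) :=
  match v with
  | inl (inl (inl (inr jc))) => Some jc
  | inl (inr (j, c, _)) => Some (j, c)
  | _ => None
  end.

Lemma spoke_branch_inj : injective spoke_branch.
Proof.
apply: (pcan_inj (g := spoke_index)) => -[j c]; rewrite /spoke_branch /=.
by case: ifP => _ //; case: ifP.
Qed.

Lemma spoke_branchP j c : ES apex (vR j c ord0) ->
  (spoke_branch (j, c) \in B) && spoke (spoke_branch (j, c)).
Proof.
move=> e0; rewrite /spoke_branch /=.
have [R0B|R1B|/andP[DB e2]] := model_path3_branch model e0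
  (fun z e => G_nbr_R0 (model_G_E e)) (fun z e => G_nbr_R1 (model_G_E e)) isT.
- by rewrite !R0B.
- by case: ifP => [-> | _]; rewrite ?R1B.
- by do 2 case: ifP => [-> //|_]; rewrite DB /spoke /= e2.
Qed.

Lemma deg_apex_le : deg apex <= \sum_(v in B :\ apex) spoke v.
Proof.
pose X := [set x : 'I_p * 'I_m | ES apex (vR x.1 x.2 ord0)].
apply: leq_trans (deg_le_card (N := [set vR x.1 x.2 ord0 | x in X]) _) _.
  move=> w e; have [j [c ew]] := G_nbr_apex (model_G_E e); subst w.
  by apply/imsetP; exists (j, c); rewrite // inE.
apply: leq_trans (leq_imset_card _ _) _.
rewrite -(card_imset _ spoke_branch_inj) -card_set_sum.
apply/subset_leq_card/subsetP=> v /imsetP[x]; rewrite inE => /spoke_branchP.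
rewrite -surjective_pairing => /andP[xB xspoke] ->; rewrite !inE xB xspoke !andbT.
by apply: contraTneq xspoke => ->.
Qed.

Lemma sum_deg_apex : apex \in B ->
  \sum_(v in B) deg v + \sum_(v in B :\ apex) is_vU v <=
  4 * #|B :\ apex| + \sum_(v in B :\ apex) full_vD v.
Proof.
move=> aB; rewrite (big_setD1 apex aB) /=.
have : \sum_(v in B :\ apex) (deg v + spoke v + is_vU v) <= \sum_(v in B :\ apex) (4 + full_vD v).
  by apply: leq_sum => v; rewrite !inE => /andP[va _]; apply: deg_spoke_is_vU_le.
rewrite !big_split /= sum_nat_const mulnC => /(leq_trans _); apply.
by rewrite leq_add2r addnC leq_add2l deg_apex_le.
Qed.

Definition clause_full c t := (vD (cl c t) c \in B) && (4 <= deg (vD (cl c t) c)).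

Lemma deg4_vD_clause j c : 4 <= deg (vD j c) -> exists t, j = cl c t.
Proof.
move=> deg4; have : ES (vD j c) (vU p c (clause_pos j c)).
  by apply: (deg4_vD_nbrs deg4); rewrite !inE eqxx !orbT.
rewrite (model_sym model) => /model_G_E /G_nbr_U [[->]|[t' _ /eqP]] //=.
by exists (clause_pos j c).
Qed.

Lemma sum_full_vD : \sum_(v in B :\ apex) full_vD v = \sum_c #|[set t | clause_full c t]|.
Proof.
rewrite -card_set_sum -(card_set_pair (fun x => clause_full x.1 x.2)).
have inj : injective (fun x : 'I_m * 'I_3 => vD (cl x.1 x.2) x.1).
  by move=> [c t] [c' t'] /= [/[swap] <- /cl_inj ->].
rewrite -(card_imset _ inj); apply: eq_card => v; rewrite !inE.
apply/idP/imsetP => [/andP[/andP[_ vB]]|[[c t]]]; last first.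
  by rewrite inE /clause_full /= => /andP[vB deg4] ->; rewrite vB.
case: v vB => [[[[[]|[j c]]|x]|x]|x] //= vB deg4.
have [t jE] := deg4_vD_clause deg4; subst j.
by exists (c, t); rewrite // inE /clause_full /vD vB.
Qed.

Lemma sum_is_vU : \sum_(v in B :\ apex) is_vU v = \sum_c #|[set t | vU p c t \in B]|.
Proof.
rewrite -card_set_sum -(card_set_pair (fun x => vU p x.1 x.2 \in B)).
have inj : injective (fun x : 'I_m * 'I_3 => vU p x.1 x.2) by move=> [c t] [c' t'] [-> ->].
rewrite -(card_imset _ inj); apply: eq_card => v; rewrite !inE.
apply/idP/imsetP => [|[[c t]]]; last by rewrite inE /= => vB ->; rewrite vB.
by case: v => [x|[c t]] /andP[/andP[_ vB]] //= _; exists (c, t); rewrite // inE.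
Qed.

(* If all three cycle vertices of a clause had degree 4 and no triangle vertex
   were a branch vertex, the ES-edges inside the triangle would match its
   three vertices in pairs. *)
Lemma card_clause_full_le c : #|[set t | clause_full c t]| <= 2 + #|[set t | vU p c t \in B]|.
Proof.
case: (posnP #|[set t | vU p c t \in B]|) => [U0|U_gt0]; last first.
  by apply: leq_trans (max_card _) _; rewrite card_ord; lia.
rewrite U0 addn0 leqNgt; apply/negP => full3.
have allF t : clause_full c t.
  have /eqP/setP/(_ t) : [set t | clause_full c t] == setT.
    by rewrite eqEcard subsetT cardsT card_ord.
  by rewrite !inE.
have UB t : vU p c t \notin B.
  by apply: contra_eqN U0 => UB; rewrite -lt0n (cardD1 t) inE UB.
have eDU t : ES (vD (cl c t) c) (vU p c t).
  have /andP[_ deg4] := allF t.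
  by apply: (deg4_vD_nbrs deg4); rewrite /vD_nbrs clause_posE !inE eqxx !orbT.
have UT t : vU p c t \in T := model_nbr_subdiv model (eDU t) (UB t).
apply: (no_perfect_matching_ord3 (R := fun t t' => ES (vU p c t) (vU p c t'))).
- by move=> t t'; rewrite (model_sym model).
- move=> t; case: (boolP [exists t', (t' != t) && ES (vU p c t) (vU p c t')]).
    by case/existsP=> t' /andP[]; exists t'.
  rewrite negb_exists => /forallP no_nbr; exfalso.
  have : deg (vU p c t) <= #|[set vD (cl c t) c]|.
    apply: deg_le_card => w e; case: (G_nbr_U (model_G_E e)) => [->|[t' t't ew]].
      by rewrite inE.
    by move: (no_nbr t'); rewrite t't -ew e.
  by rewrite (model_deg_subdiv model (UT t)) cards1.
- move=> t t1 t2 t1t t2t e1 e2; apply/eqP.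
  have eUD : ES (vU p c t) (vD (cl c t) c) by rewrite (model_sym model).
  have := model_subdiv_nbrs3 model (UT t) eUD e1 e2.
  by rewrite /vU /vD /= => /eqP[->].
Qed.

Definition full_vD_spoke (v : G) : G :=
  if v is inl (inl (inl (inr (j, c)))) then
    (if vR j c ord_max \in B then vR j c ord_max else vR j c ord0)
  else v.

Lemma full_vD_spokeP v : apex \notin B -> v \in B -> full_vD v ->
  (full_vD_spoke v \in B) && is_vR (full_vD_spoke v).
Proof.
move=> aB; case: v => [[[[[]|[j c]]|x]|x]|x] //= vB deg4.
have e1 : ES (vD j c) (vR j c ord_max) by apply: (deg4_vD_nbrs deg4); rewrite !inE eqxx !orbT.
have nbrs1 z : ES (vR j c ord_max) z -> z = vD j c \/ z = vR j c ord0.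
  by move/model_G_E/G_nbr_R1 ; case=> ->; auto.
have nbrs2 z : ES (vR j c ord0) z -> z = vR j c ord_max \/ z = apex.
  by move/model_G_E/G_nbr_R0 ; case=> ->; auto.
have [R1B|R0B|/andP[aB' _]] := model_path3_branch model e1 nbrs1 nbrs2 isT.
- by rewrite !R1B.
- by case: ifP => [-> | _]; rewrite ?R0B.
- by rewrite aB' in aB.
Qed.

Lemma sum_deg_apex_free : apex \notin B -> \sum_(v in B) deg v <= 3 * #|B|.
Proof.
move=> aB.
have le_sum : \sum_(v in B) (deg v + is_vR v) <= \sum_(v in B) (3 + full_vD v).
  by apply: leq_sum => v vB; apply: deg_is_vR_le; apply: contraNneq aB => <-.
have le_full : \sum_(v in B) full_vD v <= \sum_(v in B) is_vR v.
  rewrite -!card_set_sum.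
  have inj : {in [set v in B | full_vD v] &, injective full_vD_spoke}.
    move=> v w; rewrite !inE => /andP[_ fv] /andP[_ fw].
    case: v fv => [[[[[]|[j c]]|x]|x]|x] //= _;
    case: w fw => [[[[[]|[j' c']]|x]|x]|x] //= _;
    by do 2 case: ifP => _ //; move=> -[-> ->].
  rewrite -(card_in_imset inj); apply/subset_leq_card/subsetP=> w.
  case/imsetP=> v; rewrite inE => /andP[vB fv] ->.
  by have /andP[wB wR] := full_vD_spokeP aB vB fv; rewrite inE wB wR.
move: le_sum; rewrite !big_split /= sum_nat_const mulnC => le_sum.
rewrite -(leq_add2r (\sum_(v in B) is_vR v)).
by apply: (leq_trans le_sum); rewrite leq_add2l.
Qed.

Lemma apex_in_branch e : 0 < m -> 0 < #|B| ->
  2 * e <= \sum_(v in B) deg v -> e * (2 * m + 1) = 5 * m * #|B| -> apex \in B.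
Proof.
move=> m_gt0 B_gt0 le_e e_eq; apply/negPn/negP=> aB.
have := leq_mul (leq_trans le_e (sum_deg_apex_free aB)) (leqnn (2 * m + 1)).
nia.
Qed.

Lemma extremal_branch_set e : 3 <= m ->
  2 * e <= \sum_(v in B) deg v -> e * (2 * m + 1) = 5 * m * #|B| -> apex \in B ->
  (forall v, v \in B -> v != apex -> full_vD v) /\ (forall c, #|[set t | clause_full c t]| = 2).
Proof.
move=> m3 le_e e_eq aB.
have cardB : #|B| = #|B :\ apex|.+1 by rewrite (cardsD1 apex B) aB.
have sum_le := leq_trans (leq_add le_e (leqnn _)) (sum_deg_apex aB).
have full_le : \sum_(v in B :\ apex) full_vD v <= #|B :\ apex|.
  by rewrite -card_set_sum; apply/subset_leq_card/subsetP=> v; rewrite inE => /andP[].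
have clause_le : \sum_c #|[set t | clause_full c t]| <= 2 * m + \sum_c #|[set t | vU p c t \in B]|.
  apply: (@leq_trans (\sum_c (2 + #|[set t | vU p c t \in B]|))).
    by apply: leq_sum => c _; apply: card_clause_full_le.
  by rewrite big_split /= sum_nat_const card_ord mulnC.
rewrite sum_full_vD sum_is_vU in sum_le full_le; rewrite cardB in e_eq.
have [bE xE yE] := extremal_count m3 sum_le full_le clause_le e_eq.
have U0 c : #|[set t | vU p c t \in B]| = 0.
  by move/eqP: yE; rewrite sum_nat_eq0 => /forallP/(_ c)/eqP.
split.
- have card_full : #|[set v in B :\ apex | full_vD v]| = #|B :\ apex|.
    by rewrite card_set_sum sum_full_vD xE bE.
  have sub : [set v in B :\ apex | full_vD v] \subset B :\ apex.
    by apply/subsetP=> v; rewrite inE => /andP[].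
  by move=> v vB va; have := subset_cardP card_full sub v; rewrite !inE va vB /= => ->.
- apply: (leq_sum_eq (F := fun=> 2)).
    by move=> c; have := card_clause_full_le c; rewrite U0 addn0.
  by rewrite sum_nat_const card_ord xE mulnC.
Qed.

Definition cycle_avoids_branch j := [forall c, (c \in cyc j) ==> (vD j c \notin B)].

Section BranchFull.
Hypothesis branch_full : forall v, v \in B -> v != apex -> full_vD v.

Lemma cycle_branch_next j c : vD j c \in B -> vD j (next (cyc j) c) \in B.
Proof.
move=> DB; have deg4 : 4 <= deg (vD j c) := branch_full DB isT.
have e0 : ES (vD j c) (vS j c ord0) by apply: (deg4_vD_nbrs deg4); rewrite !inE eqxx.
have notB t : vS j c t \notin B by apply/negP => /branch_full/(_ isT).
have [S0B|S1B|/andP[] //] := model_path3_branch model e0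
  (fun z e => G_nbr_S0 (model_G_E e)) (fun z e => G_nbr_S1 (model_G_E e)) isT.
- by move: (notB ord0); rewrite S0B.
- by move: (notB ord_max); rewrite S1B.
Qed.

Lemma cycle_branch_all j c c' :
  c \in cyc j -> c' \in cyc j -> vD j c \in B -> vD j c' \in B.
Proof.
move=> cj c'j; apply: (fconnect_closed (f := next (cyc j)) (P := fun z => vD j z \in B)).
  by move=> z; apply: cycle_branch_next.
by rewrite (fconnect_cycle (cycle_next (cyc_uniq j)) cj).
Qed.

Hypothesis cyc_mem : forall j c, (c \in cyc j) = clause_has cl j c.

Lemma cycle_avoids_branchE c t : cycle_avoids_branch (cl c t) = ~~ clause_full c t.
Proof.
have c_in : c \in cyc (cl c t) by rewrite cyc_mem; apply/existsP; exists t.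
rewrite /clause_full; case DB: (vD (cl c t) c \in B) => /=.
  rewrite (branch_full DB isT : 4 <= deg _); apply/negbTE/negP=> /forallP/(_ c).
  by rewrite c_in DB.
apply/forallP=> c'; apply/implyP=> c'_in; apply: contraFN DB.
exact: cycle_branch_all.
Qed.

End BranchFull.

Lemma exact_one_assignment_of_model e :
  (forall j c, (c \in cyc j) = clause_has cl j c) -> 3 <= m -> 0 < #|B| ->
  2 * e <= \sum_(v in B) deg v -> e * (2 * m + 1) = 5 * m * #|B| ->
  exists a : 'I_p -> bool, forall c, #|[set t | a (cl c t)]| = 1.
Proof.
move=> cyc_mem m3 B_gt0 le_e e_eq.
have aB := apex_in_branch (leq_trans (isT : 0 < 3) m3) B_gt0 le_e e_eq.
have [branch_full full2] := extremal_branch_set m3 le_e e_eq aB.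
exists cycle_avoids_branch => c.
have -> : [set t | cycle_avoids_branch (cl c t)] = ~: [set t | clause_full c t].
  by apply/setP=> t; rewrite !inE cycle_avoids_branchE.
by rewrite cardsCs setCK card_ord full2.
Qed.

End Model.
End GraphG.

Theorem lemma5 (p m : nat) (cl : 'I_m -> 'I_3 -> 'I_p)
  (cyc : 'I_p -> seq 'I_m)
  (cl_distinct : forall c : 'I_m, injective (cl c))
  (occ3 : forall j : 'I_p, (3 <= #|[set c | clause_has cl j c]|)%N)
  (cyc_uniq : forall j : 'I_p, uniq (cyc j))
  (cyc_mem : forall (j : 'I_p) (c : 'I_m), (c \in cyc j) = clause_has cl j c) :
  has_1stm_of_density (G_V cl) (G_E cl cyc)
    (((5 * m)%:R / (2 * m + 1)%:R)%R : rat) ->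
  exists a : 'I_p -> bool,
    forall c : 'I_m, #|[set t : 'I_3 | a (cl c t)]| = 1%N.
Proof.
move=> [n [eH [simple dens [k emb]]]].
case: (posnP m) => [m0 | m_gt0].
  by exists xpredT => c; have := ltn_ord c; lia.
have m3 : 3 <= m.
  apply: leq_trans (occ3 (cl (Ordinal m_gt0) ord0)) _.
  by apply: leq_trans (max_card _) _; rewrite card_ord.
have [B [T [R [model cardB le_sum]]]] := shallow_model_of_embedding simple emb.
have [||e_eq n_gt0] := density_frac (a := 5 * m) (b := 2 * m + 1) _ _ dens;
  rewrite ?muln_gt0 ?m_gt0 ?addn1 //.
by apply: (exact_one_assignment_of_model cl_distinct cyc_uniq model cyc_mem m3 _ le_sum);
  rewrite cardB.
Qed.
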